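(* Let $\mathcal K$ be a class of algebras of the same type $F$. Then: (1) $\mathsf{DH}(\mathcal K)\subseteq\mathsf{HD}(\mathcal K)$; (2) $\mathsf{DS}(\mathcal K)\subseteq\mathsf{ISD}(\mathcal K)$; (3) $\mathsf{DP}(\mathcal K)\subseteq\mathsf{IPD}(\mathcal K)$; (4) $\mathsf{VD}(\mathcal K)=\mathsf{ISD}(\mathsf V(\mathcal K))$.
   Context: For an algebra $\mathbf B$ of type $F$, $D(\mathbf B)=(\mathbf B\times\mathbf B,\tau_B)$ with $\tau_B(x,y)=(x,x)$ is the diagonal state-morphism algebra (an algebra of type $F$ extended by the unary operation $\tau_B$), and for a class $\mathcal K$, $\mathsf D(\mathcal K)=\{D(\mathbf B):\mathbf B\in\mathcal K\}$. $\mathsf I,\mathsf H,\mathsf S,\mathsf P,\mathsf V$ denote, for a class of algebras, the class of isomorphic images, homomorphic images, subalgebras, direct products, and the generated variety, respectively; compositions are applied right to left (e.g. $\mathsf{DH}(\mathcal K)=\mathsf D(\mathsf H(\mathcal K))$). *)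

From mathcomp Require Import all_boot.
Set Implicit Arguments. Unset Strict Implicit. Unset Printing Implicit Defensive.

Record signature := Signature { symb : Type; arity : symb -> nat }.

Record algebra (s : signature) := Algebra {
  carrier :> Type;
  op : forall f : symb s, ('I_(arity f) -> carrier) -> carrier }.

Arguments op {s} a f _ : rename.

Definition cls (s : signature) := algebra s -> Prop.

Definition is_hom (s : signature) (A B : algebra s) (h : A -> B) : Prop :=
  forall (f : symb s) (a : 'I_(arity f) -> A), h (op A f a) = op B f (fun i => h (a i)).

Definition is_iso (s : signature) (A B : algebra s) (h : A -> B) : Prop :=
  is_hom h /\ (forall x y, h x = h y -> x = y) /\ (forall y, exists x, h x = y).

Definition closed_sub (s : signature) (B : algebra s) (P : B -> Prop) : Prop :=
  forall (f : symb s) (a : 'I_(arity f) -> B), (forall i, P (a i)) -> P (op B f a).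

Definition subalg (s : signature) (B : algebra s) (P : B -> Prop)
  (HP : closed_sub P) : algebra s :=
  @Algebra s {x : B | P x}
    (fun f a => exist P (op B f (fun i => proj1_sig (a i)))
                       (HP f (fun i => proj1_sig (a i)) (fun i => proj2_sig (a i)))).

Definition prodalg (s : signature) (I : Type) (B : I -> algebra s) : algebra s :=
  @Algebra s (forall i : I, B i) (fun f a => fun i => op (B i) f (fun j => a j i)).

Definition Icl (s : signature) (K : cls s) : cls s :=
  fun A => exists B, K B /\ exists h : A -> B, is_iso h.

Definition Hcl (s : signature) (K : cls s) : cls s :=
  fun A => exists B, K B /\ exists h : B -> A, is_hom h /\ (forall y, exists x, h x = y).

Definition Scl (s : signature) (K : cls s) : cls s :=
  fun A => exists (B : algebra s) (P : B -> Prop) (HP : closed_sub P), K B /\ A = subalg HP.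

Definition Pcl (s : signature) (K : cls s) : cls s :=
  fun A => exists (I : Type) (B : I -> algebra s), (forall i, K (B i)) /\ A = prodalg B.

Definition Vcl (s : signature) (K : cls s) : cls s :=
  fun A => forall C : cls s, (forall B, K B -> C B) ->
    (forall B, Hcl C B -> C B) -> (forall B, Scl C B -> C B) ->
    (forall B, Pcl C B -> C B) -> C A.

(* Extension of the type by one unary operation symbol (None = tau). *)
Definition ext_sig (s : signature) : signature :=
  @Signature (option (symb s)) (fun o => match o with Some f => arity f | None => 1 end).

(* The diagonal state-morphism algebra D(B) = (B x B, tau_B), tau_B(x,y) = (x,x). *)
Definition Dalg (s : signature) (B : algebra s) : algebra (ext_sig s) :=
  @Algebra (ext_sig s) (B * B)%type
    (fun o => match o return ('I_(@arity (ext_sig s) o) -> (B * B)%type) -> (B * B)%type with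
      | Some f => fun a => (op B f (fun i => (a i).1), op B f (fun i => (a i).2))
      | None => fun a => ((a ord0).1, (a ord0).1)
      end).

Definition Dcl (s : signature) (K : cls s) : cls (ext_sig s) :=
  fun A => exists B, K B /\ A = Dalg B.

From Stdlib Require Import ProofIrrelevance FunctionalExtensionality IndefiniteDescription.
From mathcomp Require Import all_boot.
Set Implicit Arguments. Unset Strict Implicit.

(* D commutes with H, S and P because every construction on B is performed
   coordinatewise on B x B, and tau_B = (x, y) |-> (x, x) is compatible with it.
   For (4), call an algebra (A, tau) of the extended type a state-morphism
   algebra over V(K) if its F-reduct lies in V(K) and tau is an idempotent
   endomorphism of that reduct.  These algebras contain D(K) and form a class
   closed under H, S and P, hence contain V(D(K)); and each of them embeds into
   D(A) via a |-> (tau a, a).  Conversely D(V(K)) lies in V(D(K)) by induction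
   on the generation of V(K), using (1)-(3). *)

Lemma proj1_sig_inj (T : Type) (P : T -> Prop) (x y : {z | P z}) :
  proj1_sig x = proj1_sig y -> x = y.
Proof. by apply: eq_sig_hprop => z; apply: proof_irrelevance. Qed.

Lemma surj_lift (I A B : Type) (h : A -> B) :
  (forall y, exists x, h x = y) -> forall a : I -> B, exists a0 : I -> A, a = fun i => h (a0 i).
Proof.
move=> h_surj a; have [a0 Ha0] := functional_choice _ (fun i => h_surj (a i)).
by exists a0; apply: functional_extensionality => i; rewrite /= Ha0.
Qed.

Lemma iso_inv_hom s (A B : algebra s) (h : A -> B) : is_iso h ->
  exists g : B -> A, is_hom g /\ (forall x, exists y, g y = x).
Proof.
move=> [h_hom [h_inj h_surj]].
have [g hgK] := functional_choice _ h_surj.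
exists g; split=> [f b | x]; last by exists (h x); apply: h_inj; rewrite hgK.
apply: h_inj; rewrite h_hom !hgK; congr (op B f); apply: functional_extensionality => i.
by rewrite hgK.
Qed.

Section VarietyClosure.
Variables (s : signature) (K L : cls s).
Hypothesis LV : forall B, L B -> Vcl K B.

Lemma Vcl_gen A : K A -> Vcl K A.
Proof. by move=> KA C KC _ _ _; apply: KC. Qed.

Lemma Vcl_Hcl A : Hcl L A -> Vcl K A.
Proof.
move=> [B [LB hB]] C KC HC SC PC; apply: (HC).
by exists B; split; first exact: LV LB C KC HC SC PC.
Qed.

Lemma Vcl_Scl A : Scl L A -> Vcl K A.
Proof.
move=> [B [P [HP [LB ->]]]] C KC HC SC PC; apply: (SC).
by exists B, P, HP; split; first exact: LV LB C KC HC SC PC.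
Qed.

Lemma Vcl_Pcl A : Pcl L A -> Vcl K A.
Proof.
move=> [I [B [LB ->]]] C KC HC SC PC; apply: (PC).
by exists I, B; split=> // i; exact: LV (LB i) C KC HC SC PC.
Qed.

Lemma Vcl_Icl A : Icl L A -> Vcl K A.
Proof. by move=> [B [LB [h /iso_inv_hom hinv]]]; apply: Vcl_Hcl; exists B. Qed.

End VarietyClosure.

Section DiagonalCommutes.
Variables (s : signature) (K : cls s).

Lemma Dcl_Hcl A : Dcl (Hcl K) A -> Hcl (Dcl K) A.
Proof.
move=> [B [[B0 [KB0 [h [h_hom h_surj]]]] ->]].
exists (Dalg B0); split; first by exists B0.
exists (fun p : Dalg B0 => (h p.1, h p.2) : Dalg B); split.
- by move=> [f|] a //=; rewrite !h_hom.
- move=> [y1 y2]; have [x1 <-] := h_surj y1; have [x2 <-] := h_surj y2.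
  by exists (x1, x2).
Qed.

Lemma Dcl_Scl A : Dcl (Scl K) A -> Icl (Scl (Dcl K)) A.
Proof.
move=> [B [[B0 [P [HP [KB0 ->]]]] ->]].
pose P2 := fun z : Dalg B0 => P z.1 /\ P z.2.
have HP2 : closed_sub P2.
  move=> [f|] a Pa; last by case: (Pa ord0).
  by split; apply: HP => i; case: (Pa i).
exists (subalg HP2); split; first by exists (Dalg B0), P2, HP2; split; first exists B0.
exists (fun z : Dalg (subalg HP) =>
          exist P2 (proj1_sig z.1, proj1_sig z.2) (conj (proj2_sig z.1) (proj2_sig z.2))).
split; [|split].
- by move=> [f|] a; apply: proj1_sig_inj.
- move=> [x1 x2] [y1 y2] /(f_equal (@proj1_sig _ _)) [/proj1_sig_inj -> /proj1_sig_inj ->].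
  by [].
- move=> [[y1 y2] [Py1 Py2]]; exists (exist P y1 Py1, exist P y2 Py2).
  exact: proj1_sig_inj.
Qed.

Lemma Dcl_Pcl A : Dcl (Pcl K) A -> Icl (Pcl (Dcl K)) A.
Proof.
move=> [B [[I [Bi [KBi ->]]] ->]].
exists (prodalg (fun i => Dalg (Bi i))); split.
  by exists I, (fun i => Dalg (Bi i)); split=> // i; exists (Bi i).
exists (fun z : Dalg (prodalg Bi) => (fun i => (z.1 i, z.2 i)) : prodalg (fun i => Dalg (Bi i))).
split; [|split].
- by move=> [f|] a.
- move=> [x1 x2] [y1 y2] /= E; congr pair; apply: functional_extensionality_dep => i.
  + by have [] := f_equal (fun g => g i) E.
  + by have [] := f_equal (fun g => g i) E.
- move=> z; exists ((fun i => (z i).1), (fun i => (z i).2)).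
  by apply: functional_extensionality_dep => i /=; case: (z i).
Qed.

End DiagonalCommutes.

Lemma Dcl_Vcl s (K : cls s) A : Dcl (Vcl K) A -> Vcl (Dcl K) A.
Proof.
move=> [B [VB ->]].
pose C := fun B => Vcl (Dcl K) (Dalg B).
have DC_V : forall A, Dcl C A -> Vcl (Dcl K) A by move=> _ [B0 [CB0 ->]].
apply: (VB C) => B0 {}VB.
- by apply: Vcl_gen; exists B0.
- by apply: (Vcl_Hcl DC_V); apply: Dcl_Hcl; exists B0.
- by apply: (Vcl_Icl (Vcl_Scl DC_V)); apply: Dcl_Scl; exists B0.
- by apply: (Vcl_Icl (Vcl_Pcl DC_V)); apply: Dcl_Pcl; exists B0.
Qed.

Definition reduct s (A : algebra (ext_sig s)) : algebra s :=
  @Algebra s A (fun f => op A (Some f)).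

Definition smap s (A : algebra (ext_sig s)) (x : A) : A := op A None (fun _ => x).

Definition SMcl s (K : cls s) : cls (ext_sig s) := fun A =>
  [/\ Vcl K (reduct A), is_hom (smap (A := A) : reduct A -> reduct A)
    & forall x : A, smap (smap x) = smap x].

Lemma op_None s (A : algebra (ext_sig s)) a : op A None a = smap (a ord0).
Proof.
congr (op A None); apply: functional_extensionality => -[[|//] ?].
by congr a; apply: val_inj.
Qed.

Lemma is_hom_smap s (A B : algebra (ext_sig s)) (h : A -> B) :
  is_hom h -> forall x, h (smap x) = smap (h x).
Proof. by move=> h_hom x; rewrite /smap h_hom. Qed.

Section StateMorphism.
Variables (s : signature) (K : cls s).

Lemma reduct_Dalg_sq (B : algebra s) :
  exists h : reduct (Dalg B) -> prodalg (fun _ : bool => B), is_iso h.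
Proof.
exists (fun z : reduct (Dalg B) => (fun b => if b then z.1 else z.2) : prodalg (fun _ => B)).
split; [|split].
- by move=> f a; apply: functional_extensionality => -[].
- move=> [x1 x2] [y1 y2] E.
  by move: (f_equal (fun g => g true) E) (f_equal (fun g => g false) E) => /= -> ->.
- move=> z; exists (z true, z false).
  by apply: functional_extensionality => -[].
Qed.

Lemma SMcl_Dcl A : Dcl K A -> SMcl K A.
Proof.
move=> [B [KB ->]]; split=> //.
have [h h_iso] := reduct_Dalg_sq B.
apply: (Vcl_Icl (L := Pcl K)); first exact: Vcl_Pcl (@Vcl_gen _ K).
by exists (prodalg (fun _ : bool => B)); split; [exists bool, (fun _ => B) | exists h].
Qed.

Lemma SMcl_Hcl A : Hcl (SMcl K) A -> SMcl K A.
Proof.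
move=> [A0 [[VA0 smap_hom smapK] [h [h_hom h_surj]]]].
have h_smap := is_hom_smap h_hom.
split.
- apply: (Vcl_Hcl (L := Vcl K)) => //; exists (reduct A0); split=> //.
  by exists h; split=> // f; apply: (h_hom (Some f)).
- move=> f a; have [a0 ->] := surj_lift h_surj a.
  rewrite /= -(h_hom (Some f)) -h_smap (smap_hom f a0) (h_hom (Some f)).
  by congr (op A (Some f)); apply: functional_extensionality => i; rewrite /= h_smap.
- by move=> y; have [x <-] := h_surj y; rewrite -!h_smap smapK.
Qed.

Lemma SMcl_Scl A : Scl (SMcl K) A -> SMcl K A.
Proof.
move=> [A0 [P [HP [[VA0 smap_hom smapK] ->]]]]; split.
- apply: (Vcl_Scl (L := Vcl K)) => //.
  by exists (reduct A0), P, (fun f => HP (Some f)).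
- by move=> f a; apply: proj1_sig_inj; apply: smap_hom.
- by move=> x; apply: proj1_sig_inj; apply: smapK.
Qed.

Lemma SMcl_Pcl A : Pcl (SMcl K) A -> SMcl K A.
Proof.
move=> [I [B [SMB ->]]]; split.
- apply: (Vcl_Pcl (L := Vcl K)) => //.
  by exists I, (fun i => reduct (B i)); split=> // i; case: (SMB i).
- move=> f a; apply: functional_extensionality_dep => i.
  by case: (SMB i) => _ smap_hom _; apply: smap_hom.
- move=> x; apply: functional_extensionality_dep => i.
  by case: (SMB i) => _ _; apply.
Qed.

Lemma Vcl_Dcl_SMcl A : Vcl (Dcl K) A -> SMcl K A.
Proof. by move=> VA; apply: VA; [apply: SMcl_Dcl|apply: SMcl_Hcl|apply: SMcl_Scl|apply: SMcl_Pcl]. Qed.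

Lemma SMcl_embed A : SMcl K A -> Icl (Scl (Dcl (Vcl K))) A.
Proof.
move=> [VA smap_hom smapK].
pose e := fun a : A => (smap a, a) : Dalg (reduct A).
pose P := fun z : Dalg (reduct A) => exists a, z = e a.
have HP : closed_sub P.
  move=> [f|] z Pz.
  - have [a0 Ha0] := functional_choice _ Pz.
    exists (op A (Some f) a0).
    have -> : z = e \o a0 by apply: functional_extensionality.
    by rewrite /e /= (smap_hom f).
  - by have [a0 Ha0] := Pz ord0; exists (smap a0); rewrite /= Ha0 /e /= smapK.
exists (subalg HP); split; first by exists (Dalg (reduct A)), P, HP; split; first exists (reduct A).
exists (fun a => exist P (e a) (ex_intro _ a erefl)); split; [|split].
- move=> [f|] a; apply: proj1_sig_inj; rewrite /e /=.
  + by rewrite (smap_hom f).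
  + by rewrite op_None smapK.
- by move=> x y /(f_equal (fun z => (proj1_sig z).2)).
- by move=> [z [a Ea]]; exists a; apply: proj1_sig_inj.
Qed.

End StateMorphism.

Theorem lemma4p2 (s : signature) (K : cls s) :
  (forall A, Dcl (Hcl K) A -> Hcl (Dcl K) A) /\
  (forall A, Dcl (Scl K) A -> Icl (Scl (Dcl K)) A) /\
  (forall A, Dcl (Pcl K) A -> Icl (Pcl (Dcl K)) A) /\
  (forall A, Vcl (Dcl K) A <-> Icl (Scl (Dcl (Vcl K))) A).
Proof.
split; first exact: Dcl_Hcl.
split; first exact: Dcl_Scl.
split; first exact: Dcl_Pcl.
move=> A; split=> [VA | ].
- exact: SMcl_embed (Vcl_Dcl_SMcl VA).
- exact: (Vcl_Icl (Vcl_Scl (@Dcl_Vcl s K))).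
Qed.
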